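(* For every $\beta\in\mathbb N^d\setminus\{0\}$, $$\sum_{r=1}^{|\beta|}\binom{|\beta|}{r}\sum_{p(\beta,r)}\frac{r!}{k_1!\cdots k_{|\beta|}!}\le2^{|\beta|(d+1)}.$$
   Context: For $\alpha,\gamma\in\mathbb N^d$ write $\gamma\prec\alpha$ if either $|\gamma|<|\alpha|$; or $|\gamma|=|\alpha|$ and $\gamma_1<\alpha_1$; or $|\gamma|=|\alpha|$, $\gamma_1=\alpha_1,\dots,\gamma_k=\alpha_k$ and $\gamma_{k+1}<\alpha_{k+1}$ for some $1\le k<d$. For $\beta\in\mathbb N^d$ with $n=|\beta|\ge1$ and $1\le r\le n$, $p(\beta,r)$ is the set of tuples $(k_1,\dots,k_n;\beta^{(1)},\dots,\beta^{(n)})$ with $k_j\in\mathbb N$, $\beta^{(j)}\in\mathbb N^d$, such that for some $1\le s\le n$: $k_j=0$ and $\beta^{(j)}=0$ for $1\le j\le n-s$; $k_j>0$ for $n-s+1\le j\le n$; $0\prec\beta^{(n-s+1)}\prec\dots\prec\beta^{(n)}$; and $\sum_jk_j=r$, $\sum_jk_j\beta^{(j)}=\beta$ (this is the index set of the multivariate Faà di Bruno formula). *)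

From mathcomp Require Import all_boot all_order all_algebra.
Set Implicit Arguments. Unset Strict Implicit. Unset Printing Implicit Defensive.
Import Order.TTheory GRing.Theory Num.Theory.

(* Multi-indices in N^d are represented as functions 'I_d -> nat
   (coordinate i : 'I_d is the paper's coordinate i+1). *)

Definition mlen (d : nat) (a : 'I_d -> nat) : nat := \sum_(i < d) a i.

(* The existential over i : 'I_d covers both "gamma_1 < alpha_1" (i = 0)
   and "gamma_1 = alpha_1, ..., gamma_k = alpha_k, gamma_{k+1} < alpha_{k+1}"
   (i = k, 1 <= k < d). *)
Definition mprec (d : nat) (g a : 'I_d -> nat) : bool :=
  (mlen g < mlen a) ||
  ((mlen g == mlen a) &&
   [exists i : 'I_d, [forall j : 'I_d, (j < i) ==> (g j == a j)] && (g i < a i)]).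

(* Membership of (k_1,...,k_n; beta^(1),...,beta^(n)) in p(beta, r), with
   n = |beta|.  Index j : 'I_n stands for the paper's j+1.  *)
Definition in_pset (d : nat) (beta : 'I_d -> nat) (r : nat)
    (k : 'I_(mlen beta) -> nat) (bs : 'I_(mlen beta) -> 'I_d -> nat) : bool :=
  let n := mlen beta in
  [exists s : 'I_n.+1, [&& 1 <= s,
    [forall j : 'I_n, (j < n - s) ==> (k j == 0) && [forall i, bs j i == 0]],
    [forall j : 'I_n, (n - s <= j) ==> (0 < k j)],
    [forall j : 'I_n, (val j == n - s) ==> mprec (fun _ => 0) (bs j)],
    [forall j : 'I_n, forall j' : 'I_n,
       ((n - s <= j) && (val j' == (val j).+1)) ==> mprec (bs j) (bs j')],
    \sum_(j < n) k j == r &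
    [forall i : 'I_d, \sum_(j < n) k j * bs j i == beta i]]].

(* Finite carrier for the sum over p(beta, r): all entries bounded by n = |beta|.
   This loses nothing: for tuples in p(beta,r), k_j <= r <= n and each
   coordinate of beta^(j) is <= k_j beta^(j)_i <= beta_i <= n (or 0). *)
Definition ptuple (d : nat) (beta : 'I_d -> nat) : finType :=
  ({ffun 'I_(mlen beta) -> 'I_(mlen beta).+1} *
   {ffun 'I_(mlen beta) -> {ffun 'I_d -> 'I_(mlen beta).+1}})%type.

Definition pk (d : nat) (beta : 'I_d -> nat) (x : ptuple beta) :
  'I_(mlen beta) -> nat := fun j => val (x.1 j).
Definition pbs (d : nat) (beta : 'I_d -> nat) (x : ptuple beta) :
  'I_(mlen beta) -> 'I_d -> nat := fun j i => val (x.2 j i).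

Definition faa_sum (d : nat) (beta : 'I_d -> nat) (r : nat) : rat :=
  \sum_(x : ptuple beta | @in_pset d beta r (pk x) (pbs x))
     ((r`!)%:R / (\prod_(j < mlen beta) ((pk x j)`!)%:R))%R.

From mathcomp Require Import all_boot all_order all_algebra.
From mathcomp Require Import zify ring lra.
Import Order.TTheory GRing.Theory Num.Theory.

(* A tuple of p(beta, r) is determined by its multiplicity function
   g |-> sum of the k_j with beta^(j) = g, because its nonzero parts beta^(j)
   are strictly increasing for \prec; and r!/(k_1! ... k_n!) is the
   multinomial coefficient of that multiplicity function.  Summing over r,
   the inner sums are therefore bounded by the number c(beta) of sequences of
   nonzero multi-indices adding up to beta, while binom(|beta|, r) <= 2^|beta|.
   Removing the first term of such a sequence gives
   c(beta) <= sum_{0 < g <= beta} c(beta - g), and since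
   sum_{g <> 0} 2^(-d|g|) <= 1 (a geometric series and Bernoulli's inequality),
   induction on |beta| yields c(beta) <= 2^(d|beta|). *)

Set Implicit Arguments.
Unset Strict Implicit.
Unset Printing Implicit Defensive.

Lemma ler_sum_subpred (R : numDomainType) (I : finType) (P Q : pred I) (F : I -> R) :
  (forall i, P i -> Q i) -> (forall i, Q i -> 0 <= F i)%R ->
  (\sum_(i | P i) F i <= \sum_(i | Q i) F i)%R.
Proof.
move=> PQ F_ge0; rewrite [leLHS]big_mkcond [leRHS]big_mkcond /=.
apply: ler_sum => i _; case: (boolP (P i)) => [/PQ -> //|_].
by case: ifP => // /F_ge0.
Qed.

Lemma sumr_pred1_seq_le (R : numDomainType) (T : eqType) (s : seq T) (t : T) (w : R) :
  uniq s -> (0 <= w)%R -> (\sum_(r <- s | t == r) w <= w)%R.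
Proof.
move=> s_uniq w_ge0; rewrite big_const_seq iter_addr_0.
rewrite (eq_count (a2 := pred1 t)) => [|r]; last exact: eq_sym.
by rewrite count_uniq_mem //; case: (t \in s); rewrite ?mulr1n ?mulr0n.
Qed.

Lemma prod_fact_supp (I : finType) (F : I -> nat) :
  \prod_i (F i)`! = \prod_(i | 0 < F i) (F i)`!.
Proof. by rewrite [RHS]big_mkcond; apply: eq_bigr => i _; case: posnP => [->|]. Qed.

Lemma card_ord_gt_inj n (j j' : 'I_n) :
  #|[set i : 'I_n | j < i]| = #|[set i : 'I_n | j' < i]| -> j = j'.
Proof.
have card_lt (a b : 'I_n) :
    a < b -> #|[set i : 'I_n | b < i]| < #|[set i : 'I_n | a < i]|.
  move=> ab; apply: proper_card; apply/properP; split.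
    by apply/subsetP => i; rewrite !inE => /(ltn_trans ab).
  by exists b; rewrite !inE ?ltnn.
case: (ltngtP j j') => [/card_lt|/card_lt|/val_inj //] lt E; by rewrite E ltnn in lt.
Qed.

Lemma chain_trans_ord n T (R : rel T) (f : 'I_n -> T) (t : nat) : transitive R ->
  (forall j j' : 'I_n, t <= j -> j' = j.+1 :> nat -> R (f j) (f j')) ->
  forall j j' : 'I_n, t <= j -> j < j' -> R (f j) (f j').
Proof.
move=> R_trans R_succ j j' tj jj'.
have [k j'E] : exists k, j' = j + k.+1 :> nat by exists (j' - j.+1); lia.
elim: k j' j'E {jj'} => [|k IH] j' j'E; first by apply: R_succ => //; lia.
have lt_n : j + k.+1 < n by have := ltn_ord j'; lia.
by apply: (R_trans _ _ _ (IH (Ordinal lt_n) erefl)); apply: R_succ => /=; lia.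
Qed.

Lemma bin_le_exp2 n k : 'C(n, k) <= 2 ^ n.
Proof.
rewrite -{1 2}(card_ord n) -card_draws -cardsT -card_powerset.
by apply/subset_leq_card/subsetP => A _; rewrite powersetE subsetT.
Qed.

Lemma double_le_exp2 d : 0 < d -> d.*2 <= 2 ^ d.
Proof. by case: d => // d _; rewrite expnS mul2n leq_double ltn_expl. Qed.

Lemma bernoulli_ineq (R : realDomainType) (x : R) n :
  (-1 <= x -> 1 + n%:R * x <= (1 + x) ^+ n)%R.
Proof.
move=> x_ge; elim: n => [|n IH]; first by rewrite mul0r addr0 expr0.
have x1_ge0 : (0 <= 1 + x)%R by lra.
have := ler_wpM2l x1_ge0 IH.
have : (0 <= n%:R * (x * x))%R by rewrite mulr_ge0 ?ler0n // -expr2 sqr_ge0.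
rewrite exprS -natr1; nra.
Qed.

Lemma geometric_sum_le (R : numDomainType) (q : R) M :
  (0 <= q -> (\sum_(c < M) q ^+ c) * (1 - q) <= 1)%R.
Proof.
move=> q_ge0; have := subrXX 1 q M; rewrite expr1n mulrC.
under eq_bigr do rewrite expr1n mul1r.
by move=> <-; rewrite lerBlDr lerDl exprn_ge0.
Qed.

Section Multinomial.
Variables (T : finType) (L : nat).
Implicit Types (m : {ffun T -> 'I_L.+1}) (g h : T).

Definition msize m : nat := \sum_g (m g : nat).

Definition multinomial m : rat := ((msize m)`!%:R / (\prod_g (m g)`!)%:R)%R.

Definition mdec m g : {ffun T -> 'I_L.+1} := [ffun h => inord (m h - (h == g))].

Lemma mdecE m g h : mdec m g h = m h - (h == g) :> nat.
Proof. by rewrite ffunE inordK // ltnS (leq_trans (leq_subr _ _)) // -ltnS. Qed.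

Lemma mdec_neq m g h : h != g -> mdec m g h = m h :> nat.
Proof. by move=> /negbTE hg; rewrite mdecE hg subn0. Qed.

Lemma msize_dec m g : 0 < m g -> msize (mdec m g) = (msize m).-1.
Proof.
move=> mg; rewrite /msize (bigD1 g) //= [in RHS](bigD1 g) //= mdecE eqxx.
by rewrite (eq_bigr _ (fun h => @mdec_neq m g h)); lia.
Qed.

Lemma prod_fact_dec m g : 0 < m g ->
  \prod_h (m h)`! = m g * \prod_h (mdec m g h)`!.
Proof.
move=> mg; rewrite (bigD1 g) //= [in RHS](bigD1 g) //= mdecE eqxx subn1.
rewrite (eq_bigr _ (fun h hg => congr1 factorial (@mdec_neq m g h hg))).
rewrite mulnA; congr (_ * _); by case: (nat_of_ord (m g)) mg.
Qed.

Lemma multinomial_ge0 m : (0 <= multinomial m)%R.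
Proof. by rewrite divr_ge0 ?ler0n. Qed.

Lemma multinomial_rec m : 0 < msize m ->
  multinomial m = (\sum_(g | (0 < m g)%N) multinomial (mdec m g))%R.
Proof.
move=> m_pos.
have dec_weight g : 0 < m g -> multinomial (mdec m g) =
    ((m g)%:R * ((msize m).-1`!%:R / (\prod_h (m h)`!)%:R))%R.
  move=> mg; rewrite /multinomial msize_dec // (prod_fact_dec mg) natrM.
  by field; rewrite ?pnatr_eq0 -?lt0n ?mg ?prodn_gt0 // => h; rewrite fact_gt0.
rewrite (eq_bigr _ dec_weight) -big_distrl /= -natr_sum.
rewrite big_rmcond => [|g]; last by rewrite lt0n negbK => /eqP ->.
rewrite /multinomial -/(msize m) mulrA -natrM.
by case: (msize m) m_pos => // s _; rewrite factS.
Qed.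

Lemma mdec_inj g :
  {in [pred m : {ffun T -> 'I_L.+1} | 0 < m g] &, injective (mdec^~ g)}.
Proof.
move=> m m' mg m'g /ffunP eq_dec; apply/ffunP => h; apply: val_inj.
have := congr1 val (eq_dec h); rewrite /= !mdecE.
by case: eqP => [->|]; [move: mg m'g; rewrite !inE; lia | rewrite !subn0].
Qed.

End Multinomial.

Definition mvec d N := {ffun 'I_d -> 'I_N.+1}.
Definition mvec0 d N : mvec d N := [ffun=> ord0].
Definition vnat d N (g : mvec d N) : 'I_d -> nat := fun i => g i.
Definition vsub d N (b : 'I_d -> nat) (g : mvec d N) : 'I_d -> nat :=
  fun i => b i - g i.

Lemma mvec0P d N (g : mvec d N) : reflect (g = mvec0 d N) (mlen (vnat g) == 0).
Proof.
apply: (iffP idP) => [|->]; last by rewrite /mlen big1 // => i _; rewrite /vnat ffunE.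
rewrite sum_nat_eq0 => /forallP g0; apply/ffunP => i; apply: val_inj.
by rewrite ffunE; apply/eqP; apply: g0.
Qed.

Lemma sum_mvec_pow_le (R : realFieldType) d N (q : R) :
  (0 <= q -> q <= 1 -> (d%:R * q) *+ 2 <= 1 ->
   \sum_(g : mvec d N | g != mvec0 d N) q ^+ mlen (vnat g) <= 1)%R.
Proof.
move=> q_ge0 q_le1 dq_small.
set S := (\sum_(c < N.+1) q ^+ c)%R.
have sum_all : (\sum_(g : mvec d N) q ^+ mlen (vnat g) = S ^+ d)%R.
  rewrite -[in RHS](card_ord d) -prodr_const bigA_distr_bigA /=.
  apply: eq_bigr => g _.
  by rewrite /mlen (big_morph (fun k => q ^+ k)%R (exprD q) (expr0 q)).
have S_ge0 : (0 <= S)%R by rewrite sumr_ge0 // => c _; rewrite exprn_ge0.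
have SqK : ((S * (1 - q)) ^+ d <= 1)%R.
  by rewrite exprn_ile1 ?mulr_ge0 ?geometric_sum_le ?subr_ge0.
have half_le : (2^-1 <= (1 - q) ^+ d)%R.
  apply: le_trans (bernoulli_ineq _ _) => [|]; last by lra.
  by rewrite mulrN; lra.
have Sd_le2 : (S ^+ d <= 2)%R.
  have Sd_ge0 : (0 <= S ^+ d)%R by rewrite exprn_ge0.
  move: SqK; rewrite exprMn; nra.
have len0 : mlen (vnat (mvec0 d N)) = 0 by apply/eqP/mvec0P.
by move: Sd_le2; rewrite -sum_all (bigD1 (mvec0 d N)) //= len0 expr0; lra.
Qed.

Section Compositions.
Variables (d N L : nat).
Local Notation mult := {ffun mvec d N -> 'I_L.+1}.
Implicit Types (b : 'I_d -> nat) (g : mvec d N) (m : mult).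

Definition mvsum m (i : 'I_d) : nat := \sum_g m g * g i.

Definition composes b m : bool :=
  (m (mvec0 d N) == 0 :> nat) && [forall i, mvsum m i == b i].

(* [ncomp b] is the number of sequences of nonzero parts in [mvec d N], each
   used at most [L] times, adding up to [b]: a multinomial coefficient counts
   the orderings of a multiset. *)
Definition ncomp b : rat := \sum_(m | composes b m) multinomial m.

Lemma composes_le b m g i : composes b m -> 0 < m g -> g i <= b i.
Proof.
case/andP=> _ /forallP/(_ i)/eqP <- mg.
by rewrite /mvsum (bigD1 g) //= (leq_trans _ (leq_addr _ _)) // leq_pmull.
Qed.

Lemma mvsum_dec m g i : 0 < m g -> mvsum (mdec m g) i = mvsum m i - g i.
Proof.
move=> mg; rewrite /mvsum (bigD1 g) //= [in RHS](bigD1 g) //= mdecE eqxx.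
under eq_bigr => h hg do rewrite mdec_neq //.
by case: (nat_of_ord (m g)) mg => // k _; rewrite subn1 succnK mulSn -addnA addKn.
Qed.

Lemma composes_dec b m g : g != mvec0 d N -> composes b m -> 0 < m g ->
  composes (vsub b g) (mdec m g).
Proof.
move=> g_nz /andP[m0 /forallP mb] mg; apply/andP; split.
  by rewrite mdec_neq // eq_sym.
by apply/forallP => i; rewrite mvsum_dec // (eqP (mb i)).
Qed.

Lemma ncomp0 b : mlen b = 0 -> (ncomp b <= 1)%R.
Proof.
move=> /eqP; rewrite sum_nat_eq0 => /forallP b0.
pose m0 : mult := [ffun=> ord0].
have only_m0 m : composes b m -> m == m0.
  move=> bm; apply/eqP/ffunP => g; apply: val_inj; rewrite ffunE /=.
  have [->|g_nz] := eqVneq g (mvec0 d N); first by case/andP: bm => /eqP.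
  apply/eqP; apply: contraR g_nz; rewrite -lt0n => mg; apply/eqP/mvec0P.
  rewrite sum_nat_eq0; apply/forallP => i.
  by rewrite -leqn0 -(eqP (b0 i)) (composes_le _ bm).
apply: le_trans (ler_sum_subpred only_m0 (fun m _ => multinomial_ge0 m)) _.
rewrite big_pred1_eq /multinomial /msize !big1 ?divr1 // => g _; by rewrite ffunE.
Qed.

Lemma ncomp_rec b i0 : b i0 != 0 ->
  (ncomp b <= \sum_(g | (g != mvec0 d N) && [forall i, g i <= b i]%N)
                 ncomp (vsub b g))%R.
Proof.
move=> bi0; rewrite /ncomp.
have size_pos m : composes b m -> 0 < msize m.
  case/andP=> _ /forallP/(_ i0)/eqP mb; rewrite lt0n; apply: contra bi0.
  rewrite /msize sum_nat_eq0 -mb => /forallP m0; rewrite /mvsum big1 // => g _.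
  by rewrite (eqP (m0 g)).
rewrite (eq_bigr _ (fun m bm => multinomial_rec (size_pos m bm))).
have part_below m g : composes b m -> 0 < m g ->
    (g != mvec0 d N) && [forall i, g i <= b i].
  move=> bm mg; apply/andP; split.
    by apply: contraTneq mg => ->; case/andP: bm => /eqP ->.
  by apply/forallP => i; apply: composes_le bm mg.
rewrite (exchange_big_dep _ part_below) /=.
apply: ler_sum => g /andP[g_nz _].
have dec_inj :
    {in [pred m : mult | composes b m && (0 < m g)] &, injective (fun m => mdec m g)}.
  by move=> m m' /andP[_ mg] /andP[_ m'g]; apply: mdec_inj.
rewrite -(big_imset _ dec_inj) /=.
apply: ler_sum_subpred => [_ /imsetP[m /andP[bm mg] ->]|m _].
  exact: composes_dec.
exact: multinomial_ge0.
Qed.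

Lemma ncomp_le_pow (K : rat) b : (0 < K)%R ->
  (\sum_(g | g != mvec0 d N) K^-1 ^+ mlen (vnat g) <= 1)%R ->
  (ncomp b <= K ^+ mlen b)%R.
Proof.
move=> K_pos sumK; have [n] := ubnP (mlen b); elim: n b => // n IH b /ltnSE b_le.
case: (pickP (fun i => b i != 0)) => [i0 bi0|b0]; last first.
  have b_empty : mlen b = 0 by rewrite /mlen big1 // => i _; apply/eqP/negbFE/b0.
  by rewrite b_empty expr0 ncomp0.
apply: le_trans (ncomp_rec bi0) _.
pose bound g := (K ^+ mlen b * K^-1 ^+ mlen (vnat g))%R.
apply: (@le_trans _ _
  (\sum_(g | (g != mvec0 d N) && [forall i, g i <= b i]%N) bound g)%R).
  apply: ler_sum => g /andP[g_nz /forallP g_le].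
  have len_sub : mlen (vsub b g) + mlen (vnat g) = mlen b.
    rewrite /mlen -big_split; apply: eq_bigr => i _.
    by rewrite /= /vsub /vnat subnK ?g_le.
  have g_pos : 0 < mlen (vnat g).
    by rewrite lt0n; apply: contra g_nz => /mvec0P ->.
  rewrite /bound -len_sub exprD exprVn mulfK ?expf_neq0 ?gt_eqF //.
  by apply: IH; lia.
apply: le_trans (ler_sum_subpred (Q := fun g => g != mvec0 d N) _ _) _.
- by move=> g /andP[].
- by move=> g _; rewrite mulr_ge0 // exprn_ge0 // ?invr_ge0 ltW.
by rewrite -big_distrr /= ler_piMr // exprn_ge0 // ltW.
Qed.

End Compositions.

Lemma ncomp_le_exp2 d N L (b : 'I_d -> nat) : 0 < d ->
  (ncomp N L b <= (2 ^ d)%:R ^+ mlen b)%R.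
Proof.
move=> d_gt0; have K_gt0 : (0 < (2 ^ d)%:R :> rat)%R by rewrite ltr0n expn_gt0.
apply: ncomp_le_pow => //; apply: sum_mvec_pow_le.
- by rewrite invr_ge0 ltW.
- by rewrite invf_le1 // ler1n expn_gt0.
rewrite -mulrnAl ler_pdivrMr // mul1r mulr2n -natrD ler_nat addnn.
exact: double_le_exp2.
Qed.

Lemma mprec_irr d : irreflexive (@mprec d).
Proof.
move=> a; rewrite /mprec ltnn eqxx /=; apply/negbTE/existsPn => i.
by rewrite ltnn andbF.
Qed.

Lemma mprec_trans d : transitive (@mprec d).
Proof.
move=> a g c; rewrite /mprec.
case/orP=> [lt_ga|/andP[/eqP eq_ga /existsP[i1 /andP[/forallP pre1 lt1]]]];
case/orP=> [lt_ac|/andP[/eqP eq_ac /existsP[i2 /andP[/forallP pre2 lt2]]]].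
- by rewrite (ltn_trans lt_ga lt_ac).
- by rewrite -eq_ac lt_ga.
- by rewrite eq_ga lt_ac.
rewrite eq_ga eq_ac eqxx /=; apply/orP; right; apply/existsP.
have [lt12|le21] := ltnP i1 i2.
  exists i1; rewrite -(eqP (implyP (pre2 i1) lt12)) lt1 andbT.
  apply/forallP => j; apply/implyP => ji1.
  by rewrite (eqP (implyP (pre1 j) ji1)) (implyP (pre2 j) (ltn_trans ji1 lt12)).
exists i2; apply/andP; split.
  apply/forallP => j; apply/implyP => ji2.
  by rewrite (eqP (implyP (pre1 j) (leq_trans ji2 le21))) (implyP (pre2 j) ji2).
move: le21; rewrite leq_eqVlt => /orP[/eqP/val_inj eq21|lt21].
  by rewrite eq21 in lt2 *; apply: ltn_trans lt1 lt2.
by rewrite (eqP (implyP (pre1 i2) lt21)).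
Qed.

Lemma mprec0 d (a : 'I_d -> nat) : mprec (fun _ => 0) a = (0 < mlen a).
Proof.
have len0 : mlen (fun _ : 'I_d => 0) = 0 by rewrite /mlen big1.
rewrite /mprec len0; have [a0|//] := posnP (mlen a).
rewrite a0 eqxx /=; apply/negbTE/existsPn => i.
rewrite negb_and -leqNgt leqn0; apply/orP; right.
by move/eqP: a0; rewrite sum_nat_eq0 => /forallP/(_ i).
Qed.

Section FaaTuples.
Variables (d : nat) (beta : 'I_d -> nat).
Local Notation n := (mlen beta).
Implicit Types (x y : ptuple beta) (r : nat).

Lemma in_psetP r x : in_pset r (pk x) (pbs x) ->
  [/\ forall j, pk x j = 0 -> x.2 j = mvec0 d n,
      forall j, 0 < pk x j -> x.2 j != mvec0 d n,
      forall j j' : 'I_n, 0 < pk x j -> j < j' ->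
        (0 < pk x j') && mprec (pbs x j) (pbs x j'),
      \sum_j pk x j = r &
      forall i, \sum_j pk x j * pbs x j i = beta i].
Proof.
case/existsP => s /and5P[_ /forallP zero_pre /forallP pos_suf /forallP first_nz].
case/and3P=> [/forallP succ_prec /eqP sum_k /forallP sum_b].
set t := n - s.
have active j : (0 < pk x j) = (t <= j).
  case: (leqP t j) => tj; first exact: implyP (pos_suf j) tj.
  by have /andP[/eqP -> _] := implyP (zero_pre j) tj.
have incr : forall j j' : 'I_n, t <= j -> j < j' -> mprec (pbs x j) (pbs x j').
  apply: chain_trans_ord (@mprec_trans d) _ => j j' tj j'E.
  by apply: (implyP (forallP (succ_prec j) j')); rewrite tj /=; apply/eqP.
split => [j kj0|j|j j'|//|i]; last exact/eqP.
- have tj : j < t by rewrite ltnNge -active kj0.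
  have /andP[_ /forallP bs0] := implyP (zero_pre j) tj.
  by apply/ffunP => i; apply: val_inj; rewrite ffunE; apply/eqP/bs0.
- rewrite active => tj; apply/negP => /eqP xj0.
  have t_lt : t < n := leq_ltn_trans tj (ltn_ord j).
  have first_pos := implyP (first_nz (Ordinal t_lt)) (eqxx _).
  have : mprec (fun _ => 0) (pbs x j).
    move: tj; rewrite leq_eqVlt => /orP[/eqP tE|lt_tj].
      by have -> : j = Ordinal t_lt by apply: val_inj.
    exact: mprec_trans first_pos (incr (Ordinal t_lt) j (leqnn t) lt_tj).
  by rewrite mprec0 lt0n => /negP; apply; apply/mvec0P.
- rewrite !active => tj jj'; rewrite (leq_trans tj (ltnW jj')) /=.
  exact: incr.
Qed.

Definition pmult x : {ffun mvec d n -> 'I_(n * n).+1} :=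
  [ffun g => inord (\sum_(j | x.2 j == g) pk x j)].

Lemma pmultE x g : pmult x g = \sum_(j | x.2 j == g) pk x j :> nat.
Proof.
rewrite ffunE inordK // ltnS (@leq_trans (\sum_(j < n) n)) //.
  rewrite [leqLHS]big_mkcond; apply: leq_sum => j _.
  by case: ifP => // _; rewrite -ltnS ltn_ord.
by rewrite sum_nat_const card_ord.
Qed.

Lemma in_pset_inj r x : in_pset r (pk x) (pbs x) ->
  {in [pred j | 0 < pk x j] &, injective (fun j => x.2 j)}.
Proof.
case/in_psetP => _ _ incr _ _.
have no_lt (a b : 'I_n) : 0 < pk x a -> a < b -> x.2 a != x.2 b.
  move=> ka ab; apply/eqP => eq_ab; have /andP[_] := incr a b ka ab.
  by rewrite /pbs -eq_ab mprec_irr.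
move=> j j' kj kj' eq_parts; case: (ltngtP j j') => [lt|lt|/val_inj //].
  by move/eqP: eq_parts; rewrite (negbTE (no_lt _ _ kj lt)).
by move/eqP: eq_parts; rewrite eq_sym (negbTE (no_lt _ _ kj' lt)).
Qed.

Lemma pmult_active r x j : in_pset r (pk x) (pbs x) -> 0 < pk x j ->
  pmult x (x.2 j) = pk x j :> nat.
Proof.
move=> Px kj; rewrite pmultE (bigD1 j) //= big1 ?addn0 // => j' /andP[/eqP eq_j' j'j].
apply/eqP; apply: contraTT j'j; rewrite -lt0n negbK => kj'.
by apply/eqP; apply: (in_pset_inj Px).
Qed.

Lemma pmult_pos x g : 0 < pmult x g -> exists2 j, 0 < pk x j & x.2 j = g.
Proof.
rewrite pmultE lt0n sum_nat_eq0 negb_forall => /existsP[j].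
by rewrite negb_imply -lt0n => /andP[/eqP xj kj]; exists j.
Qed.

Lemma pmult_composes r x : in_pset r (pk x) (pbs x) -> composes beta (pmult x).
Proof.
move=> Px; have [_ nz _ _ sum_b] := in_psetP Px; apply/andP; split.
  rewrite pmultE sum_nat_eq0; apply/forallP => j; apply/implyP => /eqP xj0.
  by rewrite -leqn0 leqNgt; apply/negP => /nz; rewrite xj0 eqxx.
apply/forallP => i; rewrite -sum_b /mvsum (partition_big (fun j => x.2 j) predT) //=.
apply/eqP/eq_bigr => g _; rewrite pmultE big_distrl /=.
by apply: eq_bigr => j /eqP <-.
Qed.

Lemma msize_pmult r x : in_pset r (pk x) (pbs x) -> msize (pmult x) = r.
Proof.
case/in_psetP => _ _ _ <- _.
rewrite /msize (partition_big (fun j => x.2 j) predT) //=.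
by apply: eq_bigr => g _; rewrite pmultE.
Qed.

Lemma multinomial_pmult r x : in_pset r (pk x) (pbs x) ->
  multinomial (pmult x) = (r`!%:R / \prod_j ((pk x j)`!)%:R)%R.
Proof.
move=> Px; rewrite /multinomial (msize_pmult Px) -natr_prod; congr (_ / _%:R)%R.
rewrite !prod_fact_supp.
rewrite [RHS](eq_bigr (fun j => (pmult x (x.2 j))`!)) => [|j kj]; last first.
  by rewrite (pmult_active Px kj).
rewrite -(big_imset (fun g => (pmult x g)`!) (in_pset_inj Px)) /=.
apply: eq_bigl => g; apply/idP/imsetP => [/pmult_pos[j kj <-]|[j kj ->]].
  by exists j.
by rewrite (pmult_active Px kj).
Qed.

(* The active parts of a tuple are strictly increasing, so the rank of a part
   among the parts of [pmult x] recovers its position in [x]. *)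
Definition mrank (m : {ffun mvec d n -> 'I_(n * n).+1}) (h : mvec d n) : nat :=
  #|[set g | (0 < m g) && mprec (vnat h) (vnat g)]|.

Lemma mrank_pmult r x j : in_pset r (pk x) (pbs x) -> 0 < pk x j ->
  mrank (pmult x) (x.2 j) = #|[set j' : 'I_n | j < j']|.
Proof.
move=> Px kj; have [_ _ incr _ _] := in_psetP Px.
rewrite /mrank -(@card_in_imset _ _ (fun j' => x.2 j')) => [|j1 j2]; last first.
  rewrite !inE => /(incr _ _ kj)/andP[k1 _] /(incr _ _ kj)/andP[k2 _].
  exact: (in_pset_inj Px).
apply: eq_card => g; rewrite !inE; apply/andP/imsetP.
  case=> /pmult_pos[j' kj' <-] prec; exists j' => //; rewrite inE.
  case: (ltngtP j j') => // [lt|/val_inj eq]; last by rewrite eq mprec_irr in prec.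
  have /andP[_ prec'] := incr _ _ kj' lt.
  by have := mprec_trans prec prec'; rewrite mprec_irr.
case=> j'; rewrite inE => lt ->; have /andP[kj' prec] := incr _ _ kj lt.
by rewrite (pmult_active Px kj').
Qed.

Lemma pmult_active_eq r x y j :
  in_pset r (pk x) (pbs x) -> in_pset r (pk y) (pbs y) -> pmult x = pmult y ->
  0 < pk x j -> 0 < pk y j /\ y.2 j = x.2 j.
Proof.
move=> Px Py Exy kj.
have : 0 < pmult y (x.2 j) by rewrite -Exy (pmult_active Px kj).
case/pmult_pos => j' kj' yj'.
have := mrank_pmult Px kj; rewrite Exy -yj' (mrank_pmult Py kj').
by move=> /card_ord_gt_inj jj'; subst j'.
Qed.

Lemma pmult_inj r : {in [pred x | in_pset r (pk x) (pbs x)] &, injective pmult}.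
Proof.
move=> x y Px Py Exy.
have [zero_x _ _ _ _] := in_psetP Px; have [zero_y _ _ _ _] := in_psetP Py.
have same j : pk x j = pk y j /\ x.2 j = y.2 j.
  have [kx0|kx] := posnP (pk x j).
    have [ky0|ky] := posnP (pk y j); first by rewrite kx0 ky0 zero_x ?zero_y.
    by have [] := pmult_active_eq Py Px (esym Exy) ky; rewrite kx0.
  have [ky eq2] := pmult_active_eq Px Py Exy kx; split => //.
  by rewrite -(pmult_active Px kx) -(pmult_active Py ky) Exy eq2.
case: x y {Px Py Exy zero_x zero_y} same => [k1 b1] [k2 b2] same.
by congr pair; apply/ffunP => j; have [/val_inj eq1 eq2] := same j.
Qed.

Lemma faa_sum_le r : (faa_sum beta r <=
  \sum_(m : {ffun mvec d n -> 'I_(n * n).+1} | composes beta m && (msize m == r))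
     multinomial m)%R.
Proof.
rewrite /faa_sum (eq_bigr (fun x => multinomial (pmult x))) => [|x Px]; last first.
  by rewrite (multinomial_pmult Px).
rewrite -(big_imset _ (@pmult_inj r)) /=.
apply: ler_sum_subpred => [_ /imsetP[x Px ->]|m _]; last exact: multinomial_ge0.
by rewrite (pmult_composes Px) (msize_pmult Px) eqxx.
Qed.

Lemma sum_faa_le_ncomp :
  (\sum_(1 <= r < n.+1) faa_sum beta r <= ncomp n (n * n) beta)%R.
Proof.
apply: le_trans (ler_sum _ (fun r _ => faa_sum_le r)) _.
rewrite (exchange_big_dep (composes beta)) /=; last by move=> r m _ /andP[].
apply: ler_sum => m bm.
rewrite (eq_bigl (fun r => msize m == r)) => [|r]; last by rewrite bm.
by rewrite sumr_pred1_seq_le ?iota_uniq ?multinomial_ge0.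
Qed.

End FaaTuples.

Local Open Scope ring_scope.

Theorem lemma7p4 (d : nat) (beta : 'I_d -> nat) :
  (exists i : 'I_d, beta i != 0%N) ->
  \sum_(1 <= r < (mlen beta).+1) ('C(mlen beta, r))%:R * faa_sum beta r
    <= (2%:R : rat) ^+ (mlen beta * d.+1).
Proof.
case=> i0 _; have d_gt0 : (0 < d)%N by case: d i0 {beta} => [[]|].
set n := mlen beta.
have faa_ge0 r : 0 <= faa_sum beta r.
  by apply: sumr_ge0 => x _; rewrite divr_ge0 ?ler0n ?prodr_ge0.
apply: (@le_trans _ _ ((2 ^ n)%:R * \sum_(1 <= r < n.+1) faa_sum beta r)).
  rewrite big_distrr /=; apply: ler_sum => r _.
  by rewrite ler_wpM2r // ler_nat bin_le_exp2.
have := le_trans (sum_faa_le_ncomp beta) (ncomp_le_exp2 n (n * n) beta d_gt0).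
move/(ler_wpM2l (ler0n _ (2 ^ n)))/le_trans; apply.
by rewrite -natrX -natrM -natrX ler_nat -expnM -expnD mulnS mulnC.
Qed.
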